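(* Consider the TGSS iteration with data $y^\delta$, $\|y^\delta-y\|\le\delta$, $\delta>0$. Let $k\in\mathbb N_0$ with $\|r_k^\delta\|>\frac{1+\eta}{1-\eta}\delta$. Then $z_k^\delta\in H_>(u_k^\delta,\alpha_k^\delta+\xi_k^\delta)$. If moreover $z_i^\delta\in B_{4\rho}(x_0)$ for all $i\in I_k$ and $z\in B_{4\rho}(x_0)$ satisfies $F(z)=y$, then $u_k^\delta\ne0$, $x_{k+1}^\delta$ is well defined, and $$\|z-x_{k+1}^\delta\|^2\le\|z-z_k^\delta\|^2-\left(\frac{\|r_k^\delta\|\big(\|r_k^\delta\|-\delta-\eta(\|r_k^\delta\|+\delta)\big)}{\|u_k^\delta\|}\right)^2 .$$
   Context: Setting: $\mathcal X,\mathcal Y$ are real Hilbert spaces, $F:\mathcal D(F)\subset\mathcal X\to\mathcal Y$ is continuously Fréchet differentiable with derivative $F'(x)\in\mathcal L(\mathcal X,\mathcal Y)$ and Hilbert-space adjoint $F'(x)^*$; $x_0\in\mathcal X$ and $\rho>0$ satisfy $B_{4\rho}(x_0)\subset\mathcal D(F)$, where $B_r(x)$ is the closed ball of radius $r$ about $x$. Standing assumptions: (A1) $F(x)=y$ has a solution $x_*\in B_\rho(x_0)$; (A2) there is $\eta\in(0,1)$ with $\|F(x)-F(\tilde x)-F'(x)(x-\tilde x)\|\le\eta\|F(x)-F(\tilde x)\|$ for all $x,\tilde x\in B_{4\rho}(x_0)$; (A3) $0<\|F'(x)\|\le c_F$ for all $x\in B_{4\rho}(x_0)$. Data: $y^\delta\in\mathcal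 Y$ with $\|y^\delta-y\|\le\delta$, $\delta\ge0$ ($\delta=0$ means $y^\delta=y$). Notation: for $u\in\mathcal X$, $a\in\mathbb R$, $\xi\ge0$: $H(u,a)=\{x:\langle u,x\rangle=a\}$, $H_>(u,a)=\{x:\langle u,x\rangle>a\}$, $H(u,a,\xi)=\{x:|\langle u,x\rangle-a|\le\xi\}$. $P_C$ is the metric projection onto a nonempty closed convex set $C$. TGSS iteration (for data $y^\delta$, iterates carry superscript $\delta$): fix an integer $K\ge1$; set $x_{-1}^\delta=x_0^\delta=x_0$. For $k=0,1,2,\dots$: choose $\lambda_k^\delta\in[0,1]$ with $\lambda_0^\delta=0$, put $z_k^\delta=x_k^\delta+\lambda_k^\delta(x_k^\delta-x_{k-1}^\delta)$, $r_k^\delta=F(z_k^\delta)-y^\delta$, $u_k^\delta=F'(z_k^\delta)^*r_k^\delta$, $\alpha_k^\delta=\langle u_k^\delta,z_k^\delta\rangle-\|r_k^\delta\|^2$, $\xi_k^\delta=(\delta+\eta(\|r_k^\delta\|+\delta))\|r_k^\delta\|$, $H_k^\delta=H(u_k^\delta,\alpha_k^\delta,\xi_k^\delta)$. Choose a finite index set $I_k\subset\{k-K,\dots,k\}\cap\mathbb N_0$ with $k\in I_k$, written $I_k=\{k_1>\dots>k_s\}$, $k_1=k$; set $p_1=P_{H^\delta_{k_1}}(z_k^\delta)$, $p_j=P_{H^\delta_{k_1}\cap\dots\cap H^\delta_{k_j}}(p_{j-1})$ for $j=2,\dots,s$, and $x_{k+1}^\delta=p_s$. *)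

From Stdlib Require Import Reals List Sorted.
Import ListNotations.
Open Scope R_scope.

Record HilbertSpace : Type := mkHilbert {
  hcar :> Type;
  hzero : hcar;
  hadd : hcar -> hcar -> hcar;
  hopp : hcar -> hcar;
  hscal : R -> hcar -> hcar;
  hinner : hcar -> hcar -> R;
  hadd_assoc : forall a b c, hadd a (hadd b c) = hadd (hadd a b) c;
  hadd_comm : forall a b, hadd a b = hadd b a;
  hadd_0 : forall a, hadd a hzero = a;
  hadd_opp : forall a, hadd a (hopp a) = hzero;
  hscal_assoc : forall s t a, hscal s (hscal t a) = hscal (s * t) a;
  hscal_1 : forall a, hscal 1 a = a;
  hscal_distr_v : forall s a b, hscal s (hadd a b) = hadd (hscal s a) (hscal s b);
  hscal_distr_s : forall s t a, hscal (s + t) a = hadd (hscal s a) (hscal t a);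
  hinner_sym : forall a b, hinner a b = hinner b a;
  hinner_add : forall a b c, hinner (hadd a b) c = hinner a c + hinner b c;
  hinner_scal : forall s a b, hinner (hscal s a) b = s * hinner a b;
  hinner_pos : forall a, 0 <= hinner a a;
  hinner_def : forall a, hinner a a = 0 -> a = hzero;
  hcomplete : forall u : nat -> hcar,
    (forall eps, eps > 0 -> exists N, forall m n, (N <= m)%nat -> (N <= n)%nat ->
        sqrt (hinner (hadd (u m) (hopp (u n))) (hadd (u m) (hopp (u n)))) < eps) ->
    exists l, forall eps, eps > 0 -> exists N, forall n, (N <= n)%nat ->
        sqrt (hinner (hadd (u n) (hopp l)) (hadd (u n) (hopp l))) < eps
}.

Arguments hzero {_}.
Arguments hadd {_} _ _.
Arguments hopp {_} _.
Arguments hscal {_} _ _.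
Arguments hinner {_} _ _.

Definition hsub {X : HilbertSpace} (a b : X) : X := hadd a (hopp b).
Definition hnorm {X : HilbertSpace} (a : X) : R := sqrt (hinner a a).

Definition ball {X : HilbertSpace} (c : X) (r : R) (p : X) : Prop :=
  hnorm (hsub p c) <= r.

Definition strip {X : HilbertSpace} (u : X) (a xi : R) (p : X) : Prop :=
  Rabs (hinner u p - a) <= xi.

Definition halfspace_gt {X : HilbertSpace} (u : X) (a : R) (p : X) : Prop :=
  hinner u p > a.

Definition is_proj {X : HilbertSpace} (C : X -> Prop) (q p : X) : Prop :=
  C p /\ forall c, C c -> hnorm (hsub q p) <= hnorm (hsub q c).

Definition bounded_linear {X Y : HilbertSpace} (A : X -> Y) : Prop :=
  (forall a b, A (hadd a b) = hadd (A a) (A b)) /\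
  (forall s a, A (hscal s a) = hscal s (A a)) /\
  (exists C, forall h, hnorm (A h) <= C * hnorm h).

Definition cont_frechet {X Y : HilbertSpace} (DF : X -> Prop) (F : X -> Y)
  (F' : X -> X -> Y) : Prop :=
  (forall x, DF x -> bounded_linear (F' x)) /\
  (forall x, DF x -> forall eps, eps > 0 -> exists d, d > 0 /\
     forall h, DF (hadd x h) -> hnorm h < d ->
       hnorm (hsub (hsub (F (hadd x h)) (F x)) (F' x h)) <= eps * hnorm h) /\
  (forall x, DF x -> forall eps, eps > 0 -> exists d, d > 0 /\
     forall x', DF x' -> hnorm (hsub x' x) < d ->
       forall h, hnorm (hsub (F' x' h) (F' x h)) <= eps * hnorm h).

Definition is_adjoint {X Y : HilbertSpace} (A : X -> Y) (B : Y -> X) : Prop :=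
  forall h w, hinner (A h) w = hinner h (B w).

Section TGSS.
Context {X Y : HilbertSpace} (F : X -> Y) (Fadj : X -> Y -> X) (yd : Y)
  (delta eta : R) (lam : nat -> R) (x : nat -> X) (I : nat -> list nat).

(* x_{k-1}, with the convention x_{-1} = x_0 *)
Definition tgss_xprev (k : nat) : X :=
  match k with O => x O | S j => x j end.
Definition tgss_z (k : nat) : X :=
  hadd (x k) (hscal (lam k) (hsub (x k) (tgss_xprev k))).
Definition tgss_r (k : nat) : Y := hsub (F (tgss_z k)) yd.
Definition tgss_u (k : nat) : X := Fadj (tgss_z k) (tgss_r k).
Definition tgss_alpha (k : nat) : R :=
  hinner (tgss_u k) (tgss_z k) - (hnorm (tgss_r k)) ^ 2.
Definition tgss_xi (k : nat) : R :=
  (delta + eta * (hnorm (tgss_r k) + delta)) * hnorm (tgss_r k).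
Definition tgss_H (k : nat) : X -> Prop :=
  strip (tgss_u k) (tgss_alpha k) (tgss_xi k).
Definition tgss_Hcap (l : list nat) (p : X) : Prop :=
  forall i, In i l -> tgss_H i p.

(* sequential projections: p_j = P_{H_{k_1} ∩ ... ∩ H_{k_j}}(p_{j-1}) *)
Fixpoint tgss_chain (pre rest : list nat) (p out : X) : Prop :=
  match rest with
  | [] => out = p
  | i :: rest' => exists p', is_proj (tgss_Hcap (pre ++ [i])) p p' /\
                             tgss_chain (pre ++ [i]) rest' p' out
  end.

Definition tgss_step (k : nat) (xn : X) : Prop :=
  tgss_chain [] (I k) (tgss_z k) xn.
End TGSS.

Definition admissible_index_set (K k : nat) (l : list nat) : Prop :=
  hd_error l = Some k /\
  StronglySorted (fun a b => (b < a)%nat) l /\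
  (forall i, In i l -> (k <= i + K)%nat /\ (i <= k)%nat).

From Stdlib Require Import Reals List.
From Stdlib Require Import Lra Psatz ClassicalEpsilon.
Import ListNotations.
Open Scope R_scope.

(* By the adjoint identity and the tangential cone condition (A2) at [z_i],
   every solution [z] of [F z = y] in the ball lies in each strip [H_i], so the
   sequential projections exist (projections onto nonempty closed convex sets)
   and never increase the distance to [z].  When the residual exceeds
   (1 + eta) / (1 - eta) * delta, the point [z_k] lies strictly beyond [H_k],
   since <u_k, z_k> - alpha_k - xi_k = |r_k| (|r_k| - delta - eta (|r_k| + delta)) > 0;
   dividing by |u_k| gives its distance to [H_k], and the Pythagorean
   inequality for the first projection turns this distance into the claimed
   decrease. *)

Lemma Rabs_le_inv a b : Rabs a <= b -> - b <= a <= b.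
Proof.
  intro H. pose proof (Rle_abs a). pose proof (Rle_abs (- a)).
  rewrite Rabs_Ropp in *. lra.
Qed.

Lemma Rle_of_pow2_le a b : 0 <= b -> a ^ 2 <= b ^ 2 -> a <= b.
Proof. intros Hb H. nra. Qed.

Lemma inv_INR_S_le N n : (0 < N)%nat -> (N <= n)%nat -> / INR (S n) <= / INR N.
Proof. intros. apply Rinv_le_contravar; [apply lt_0_INR | apply le_INR]; lia. Qed.

Section InnerProduct.
Context {X : HilbertSpace}.
Implicit Types a b c : X.

Lemma hinner_0_l b : hinner (@hzero X) b = 0.
Proof. pose proof (hinner_add X hzero hzero b) as H. rewrite hadd_0 in H. lra. Qed.

Lemma hinner_opp_l a b : hinner (hopp a) b = - hinner a b.
Proof.
  pose proof (hinner_add X a (hopp a) b) as H. rewrite hadd_opp, hinner_0_l in H. lra.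
Qed.

Lemma hinner_add_r a b c : hinner a (hadd b c) = hinner a b + hinner a c.
Proof. rewrite !(hinner_sym X a), hinner_add; reflexivity. Qed.

Lemma hinner_opp_r a b : hinner a (hopp b) = - hinner a b.
Proof. rewrite !(hinner_sym X a), hinner_opp_l; reflexivity. Qed.

Lemma hinner_scal_r s a b : hinner a (hscal s b) = s * hinner a b.
Proof. rewrite !(hinner_sym X a), hinner_scal; reflexivity. Qed.

Lemma hinner_0_r a : hinner a (@hzero X) = 0.
Proof. rewrite hinner_sym; apply hinner_0_l. Qed.

Lemma hinner_sub_l a b c : hinner (hsub a b) c = hinner a c - hinner b c.
Proof. unfold hsub. rewrite hinner_add, hinner_opp_l. ring. Qed.

Lemma hinner_sub_r a b c : hinner a (hsub b c) = hinner a b - hinner a c.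
Proof. unfold hsub. rewrite hinner_add_r, hinner_opp_r. ring. Qed.

Lemma hnorm_ge0 a : 0 <= hnorm a.
Proof. apply sqrt_pos. Qed.

Lemma hnorm_sq a : hnorm a ^ 2 = hinner a a.
Proof. apply pow2_sqrt, hinner_pos. Qed.

Lemma hnorm_0 : hnorm (@hzero X) = 0.
Proof. unfold hnorm. rewrite hinner_0_l. apply sqrt_0. Qed.

End InnerProduct.

Ltac hinner_expand := unfold hsub;
  repeat rewrite ?hinner_add, ?hinner_opp_l, ?hinner_scal,
    ?hinner_add_r, ?hinner_opp_r, ?hinner_scal_r.
Tactic Notation "hinner_expand" "in" hyp(H) := revert H; hinner_expand; intro H.

Section Norm.
Context {X : HilbertSpace}.
Implicit Types a b c q : X.

Lemma hnorm_sub_sq a b : hnorm (hsub a b) ^ 2 = hinner a a - 2 * hinner a b + hinner b b.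
Proof. rewrite hnorm_sq. hinner_expand. rewrite (hinner_sym X b a). ring. Qed.

Lemma hnorm_sub_sym a b : hnorm (hsub a b) = hnorm (hsub b a).
Proof. apply (Rle_antisym _ _); apply Rle_of_pow2_le; try apply hnorm_ge0;
  rewrite !hnorm_sub_sq, (hinner_sym X a b); lra.
Qed.

Lemma hinner_sq_le a b : hinner a b ^ 2 <= hinner a a * hinner b b.
Proof.
  destruct (Req_dec (hinner b b) 0) as [E|E].
  - apply (hinner_def X) in E. subst b. rewrite !hinner_0_r. nra.
  - pose proof (hinner_pos X b) as Hb.
    set (t := hinner a b / hinner b b).
    pose proof (hinner_pos X (hsub a (hscal t b))) as H.
    hinner_expand in H. rewrite (hinner_sym X b a) in H.
    assert (t * hinner b b = hinner a b) by (unfold t; field; lra).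
    nra.
Qed.

Lemma cauchy_schwarz a b : Rabs (hinner a b) <= hnorm a * hnorm b.
Proof.
  apply Rle_of_pow2_le.
  - apply Rmult_le_pos; apply hnorm_ge0.
  - rewrite pow2_abs, Rpow_mult_distr, !hnorm_sq. apply hinner_sq_le.
Qed.

Lemma hnorm_triangle a b c : hnorm (hsub a c) <= hnorm (hsub a b) + hnorm (hsub b c).
Proof.
  apply Rle_of_pow2_le.
  - pose proof (hnorm_ge0 (hsub a b)); pose proof (hnorm_ge0 (hsub b c)); lra.
  - assert (E : hnorm (hsub a c) ^ 2 = hnorm (hsub a b) ^ 2
        + 2 * hinner (hsub a b) (hsub b c) + hnorm (hsub b c) ^ 2).
    { rewrite !hnorm_sub_sq. hinner_expand. ring. }
    pose proof (Rabs_le_inv _ _ (cauchy_schwarz (hsub a b) (hsub b c))). nra.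
Qed.

(* The parallelogram law, written around the midpoint of [a] and [b]. *)
Lemma hnorm_sub_midpoint a b q :
  hnorm (hsub a b) ^ 2 = 2 * hnorm (hsub q a) ^ 2 + 2 * hnorm (hsub q b) ^ 2
    - 4 * hnorm (hsub q (hadd a (hscal (1 / 2) (hsub b a)))) ^ 2.
Proof.
  rewrite !hnorm_sq. hinner_expand.
  rewrite (hinner_sym X b a), (hinner_sym X a q), (hinner_sym X b q). field.
Qed.

End Norm.
Section Projection.
Context {X : HilbertSpace}.
Implicit Types a b c p q : X.

Definition convex_set (C : X -> Prop) : Prop :=
  forall a b t, C a -> C b -> 0 <= t <= 1 -> C (hadd a (hscal t (hsub b a))).

Definition closed_set (C : X -> Prop) : Prop :=
  forall (s : nat -> X) l, (forall n, C (s n)) ->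
  (forall eps, eps > 0 -> exists N, forall n, (N <= n)%nat -> hnorm (hsub (s n) l) < eps) ->
  C l.

Lemma convex_set_list_cap {I : Type} (C : I -> X -> Prop) (l : list I) :
  (forall i, In i l -> convex_set (C i)) ->
  convex_set (fun p => forall i, In i l -> C i p).
Proof. intros HC a b t Ha Hb Ht i Hi. exact (HC i Hi a b t (Ha i Hi) (Hb i Hi) Ht). Qed.

Lemma closed_set_list_cap {I : Type} (C : I -> X -> Prop) (l : list I) :
  (forall i, In i l -> closed_set (C i)) ->
  closed_set (fun p => forall i, In i l -> C i p).
Proof. intros HC s p Hs Hp i Hi. exact (HC i Hi s p (fun n => Hs n i Hi) Hp). Qed.

(* Compare [p] with the points [p + t (c - p)], 0 < t <= 1, of the segment towards [c]. *)
Lemma is_proj_variational C q p c :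
  convex_set C -> is_proj C q p -> C c -> hinner (hsub q p) (hsub c p) <= 0.
Proof.
  intros HC [Hp Hmin] Hc.
  set (A := hinner (hsub q p) (hsub c p)).
  set (B := hinner (hsub c p) (hsub c p)).
  assert (Hseg : forall t, 0 < t <= 1 -> 2 * t * A <= t * t * B).
  { intros t Ht.
    pose proof (Hmin _ (HC p c t Hp Hc ltac:(lra))) as Hle.
    pose proof (pow_incr _ _ 2 (conj (hnorm_ge0 _) Hle)) as H.
    rewrite !hnorm_sq in H. unfold A, B. hinner_expand in H. hinner_expand.
    rewrite (hinner_sym X p q), (hinner_sym X c q), (hinner_sym X c p) in *. nra. }
  pose proof (hinner_pos X (hsub c p)) as HB. fold B in HB.
  apply Rnot_lt_le. intro HA.
  destruct (Rle_or_lt B A) as [HBA|HAB].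
  - specialize (Hseg 1 ltac:(lra)). lra.
  - assert (HB0 : 0 < B) by lra.
    assert (Ht : A / B * B = A) by (field; lra).
    assert (0 < A / B <= 1) by (split; nra).
    specialize (Hseg (A / B) H). nra.
Qed.

Lemma is_proj_pythagoras C q p c : convex_set C -> is_proj C q p -> C c ->
  hnorm (hsub c p) ^ 2 <= hnorm (hsub c q) ^ 2 - hnorm (hsub q p) ^ 2.
Proof.
  intros HC Hp Hc. pose proof (is_proj_variational C q p c HC Hp Hc) as H.
  rewrite !hnorm_sub_sq. hinner_expand in H.
  rewrite (hinner_sym X c q), (hinner_sym X c p). lra.
Qed.

Lemma minimizing_sequence_exists (C : X -> Prop) q : (exists c, C c) ->
  exists s : nat -> X, (forall n, C (s n)) /\
    forall n c, C c -> hnorm (hsub q (s n)) ^ 2 <= hnorm (hsub q c) ^ 2 + / INR (S n).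
Proof.
  intros [c0 Hc0].
  set (E := fun v => exists c, C c /\ v = - hnorm (hsub q c) ^ 2).
  assert (HE : bound E).
  { exists 0. intros v [c [_ ->]]. pose proof (pow2_ge_0 (hnorm (hsub q c))). lra. }
  destruct (completeness E HE (ex_intro _ _ (ex_intro _ c0 (conj Hc0 eq_refl))))
    as [m [Hub Hlub]].
  assert (Happrox : forall n, exists c, C c /\ hnorm (hsub q c) ^ 2 <= - m + / INR (S n)).
  { intro n. apply Classical_Prop.NNPP. intro Hn.
    assert (Hpos : 0 < / INR (S n)) by (apply Rinv_0_lt_compat, lt_0_INR; lia).
    assert (is_upper_bound E (m - / INR (S n))).
    { intros v [c [Hc ->]]. apply Rnot_lt_le. intro Hlt. apply Hn. exists c. split; [exact Hc | lra]. }
    apply Hlub in H. lra. }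
  destruct (choice _ Happrox) as [s Hs].
  exists s. split; [intro n; apply Hs|].
  intros n c Hc. assert (Hm : - hnorm (hsub q c) ^ 2 <= m) by (apply Hub; exists c; auto).
  destruct (Hs n). lra.
Qed.

Lemma minimizing_sequence_cauchy (C : X -> Prop) q (s : nat -> X) :
  convex_set C -> (forall n, C (s n)) ->
  (forall n c, C c -> hnorm (hsub q (s n)) ^ 2 <= hnorm (hsub q c) ^ 2 + / INR (S n)) ->
  forall eps, eps > 0 -> exists N, forall m n, (N <= m)%nat -> (N <= n)%nat ->
    hnorm (hsub (s m) (s n)) < eps.
Proof.
  intros HC Hs Hmin eps Heps.
  destruct (archimed_cor1 (eps * eps / 4) ltac:(nra)) as [N [HN HN0]].
  exists N. intros m n Hm Hn.
  pose proof (inv_INR_S_le N m HN0 Hm). pose proof (inv_INR_S_le N n HN0 Hn).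
  pose proof (hnorm_sub_midpoint (s m) (s n) q).
  set (mid := hadd (s m) (hscal (1 / 2) (hsub (s n) (s m)))) in *.
  assert (Cmid : C mid) by (apply HC; auto; lra).
  pose proof (Hmin m mid Cmid). pose proof (Hmin n mid Cmid).
  pose proof (hnorm_ge0 (hsub (s m) (s n))).
  apply Rnot_le_lt. intro Hge. nra.
Qed.

Lemma is_proj_exists (C : X -> Prop) q :
  (exists c, C c) -> convex_set C -> closed_set C -> exists p, is_proj C q p.
Proof.
  intros Hne HC Hcl.
  destruct (minimizing_sequence_exists C q Hne) as [s [Hs Hmin]].
  destruct (hcomplete X s (minimizing_sequence_cauchy C q s HC Hs Hmin)) as [l Hl].
  exists l. split; [exact (Hcl s l Hs Hl)|].
  intros c Hc. apply Rle_plus_epsilon. intros eps Heps.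
  destruct (Hl (eps / 2) ltac:(lra)) as [N1 HN1].
  destruct (archimed_cor1 (eps * eps / 4) ltac:(nra)) as [N2 [HN2 HN20]].
  set (n := (N1 + N2)%nat).
  specialize (HN1 n ltac:(unfold n; lia)). change (hnorm (hsub (s n) l) < eps / 2) in HN1.
  pose proof (inv_INR_S_le N2 n HN20 ltac:(unfold n; lia)).
  assert (Hqs : hnorm (hsub q (s n)) <= hnorm (hsub q c) + eps / 2).
  { pose proof (hnorm_ge0 (hsub q c)). pose proof (Hmin n c Hc).
    apply Rle_of_pow2_le; nra. }
  pose proof (hnorm_triangle q (s n) l). lra.
Qed.

End Projection.

Section Strip.
Context {X : HilbertSpace}.
Implicit Types u p q : X.

Lemma strip_convex u a xi : convex_set (strip u a xi).
Proof.
  intros p q t Hp Hq Ht. unfold strip in *.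
  apply Rabs_le_inv in Hp. apply Rabs_le_inv in Hq. apply Rabs_le.
  hinner_expand.
  replace (hinner u p + t * (hinner u q + - hinner u p) - a)
    with ((1 - t) * (hinner u p - a) + t * (hinner u q - a)) by ring.
  split; nra.
Qed.

Lemma strip_closed u a xi : closed_set (strip u a xi).
Proof.
  intros s l Hs Hl. unfold strip in *.
  apply Rle_plus_epsilon. intros eps Heps.
  pose proof (hnorm_ge0 u).
  destruct (Hl (eps / (hnorm u + 1))) as [N HN].
  { apply Rdiv_lt_0_compat; lra. }
  specialize (HN N (Nat.le_refl _)). specialize (Hs N).
  assert (Hlip : Rabs (hinner u l - hinner u (s N)) <= eps).
  { rewrite <- hinner_sub_r.
    apply Rle_trans with (1 := cauchy_schwarz u (hsub l (s N))).
    rewrite hnorm_sub_sym.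
    apply Rle_trans with (hnorm u * (eps / (hnorm u + 1))).
    - apply Rmult_le_compat_l; lra.
    - assert (0 < eps / (hnorm u + 1)) by (apply Rdiv_lt_0_compat; lra).
      replace (hnorm u * (eps / (hnorm u + 1))) with (eps - eps / (hnorm u + 1))
        by (field; lra).
      lra. }
  pose proof (Rabs_triang (hinner u (s N) - a) (hinner u l - hinner u (s N))) as Htri.
  replace (hinner u (s N) - a + (hinner u l - hinner u (s N))) with (hinner u l - a) in Htri by ring.
  lra.
Qed.

Lemma strip_dist_ge u a xi p q : strip u a xi p ->
  hinner u q - a - xi <= hnorm u * hnorm (hsub q p).
Proof.
  intro Hp. apply Rabs_le_inv in Hp.
  pose proof (Rabs_le_inv _ _ (cauchy_schwarz u (hsub q p))) as H.
  rewrite hinner_sub_r in H. lra.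
Qed.

End Strip.

Lemma solution_in_strip {X Y : HilbertSpace} (F : X -> Y) (A : X -> Y) (B : Y -> X)
  (p q : X) (y yd : Y) (delta eta : R) :
  is_adjoint A B -> 0 <= eta -> F q = y -> hnorm (hsub yd y) <= delta ->
  hnorm (hsub (hsub (F p) (F q)) (A (hsub p q))) <= eta * hnorm (hsub (F p) (F q)) ->
  let r := hsub (F p) yd in
  strip (B r) (hinner (B r) p - hnorm r ^ 2) ((delta + eta * (hnorm r + delta)) * hnorm r) q.
Proof.
  intros Hadj Heta Fq Hyd Hlin r. unfold strip. rewrite Fq in Hlin.
  set (e := hsub (hsub (F p) y) (A (hsub p q))) in *.
  assert (E : hinner (B r) q - (hinner (B r) p - hnorm r ^ 2)
              = hinner e r + hinner (hsub y yd) r).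
  { pose proof (Hadj (hsub p q) r) as Ha.
    rewrite hinner_sub_l, !(hinner_sym X _ (B r)) in Ha.
    rewrite hnorm_sq. unfold e. rewrite !hinner_sub_l.
    assert (hinner r r = hinner (F p) r - hinner yd r) by apply hinner_sub_l.
    lra. }
  rewrite E.
  pose proof (Rabs_le_inv _ _ (cauchy_schwarz e r)) as He.
  pose proof (Rabs_le_inv _ _ (cauchy_schwarz (hsub y yd) r)) as Hn.
  rewrite hnorm_sub_sym in Hn.
  pose proof (hnorm_triangle (F p) yd y) as Htri. fold r in Htri.
  pose proof (hnorm_ge0 r).
  assert (hnorm e * hnorm r <= eta * (hnorm r + delta) * hnorm r).
  { apply Rmult_le_compat_r; [assumption|].
    apply Rle_trans with (1 := Hlin). apply Rmult_le_compat_l; lra. }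
  assert (hnorm (hsub yd y) * hnorm r <= delta * hnorm r)
    by (apply Rmult_le_compat_r; assumption).
  apply Rabs_le. nra.
Qed.

Section TGSSStep.
Context {X Y : HilbertSpace} (F : X -> Y) (Fadj : X -> Y -> X) (yd : Y)
  (delta eta : R) (lam : nat -> R) (x : nat -> X).

Notation Hstrip := (tgss_H F Fadj yd delta eta lam x).
Notation z_ := (tgss_z lam x).
Notation u_ := (tgss_u F Fadj yd lam x).
Notation alpha_ := (tgss_alpha F Fadj yd lam x).
Notation xi_ := (tgss_xi F yd delta eta lam x).
Notation Hcap := (tgss_Hcap F Fadj yd delta eta lam x).
Notation chain := (tgss_chain F Fadj yd delta eta lam x).

Lemma tgss_Hcap_convex l : convex_set (Hcap l).
Proof. apply convex_set_list_cap. intros i _. apply strip_convex. Qed.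

Lemma tgss_Hcap_closed l : closed_set (Hcap l).
Proof. apply closed_set_list_cap. intros i _. apply strip_closed. Qed.

Lemma tgss_Hcap_snoc pre i rest z :
  (forall j, In j (pre ++ i :: rest) -> Hstrip j z) -> Hcap (pre ++ [i]) z.
Proof.
  intros Hz j Hj. apply Hz. rewrite in_app_iff in *. simpl in *. tauto.
Qed.

Lemma tgss_chain_exists z : forall rest pre p,
  (forall i, In i (pre ++ rest) -> Hstrip i z) -> exists out, chain pre rest p out.
Proof.
  induction rest as [|i rest IH]; intros pre p Hz.
  - exists p. reflexivity.
  - destruct (is_proj_exists (Hcap (pre ++ [i])) p) as [p' Hp'].
    + exists z. exact (tgss_Hcap_snoc pre i rest z Hz).
    + apply tgss_Hcap_convex.
    + apply tgss_Hcap_closed.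
    + destruct (IH (pre ++ [i]) p') as [out Hout].
      { rewrite <- app_assoc. exact Hz. }
      exists out, p'. split; assumption.
Qed.

Lemma tgss_chain_fejer z : forall rest pre p out,
  (forall i, In i (pre ++ rest) -> Hstrip i z) -> chain pre rest p out ->
  hnorm (hsub z out) ^ 2 <= hnorm (hsub z p) ^ 2.
Proof.
  induction rest as [|i rest IH]; intros pre p out Hz Hc.
  - simpl in Hc. subst. lra.
  - destruct Hc as [p' [Hp' Hc]].
    pose proof (is_proj_pythagoras _ _ _ _ (tgss_Hcap_convex _) Hp'
      (tgss_Hcap_snoc pre i rest z Hz)).
    assert (hnorm (hsub z out) ^ 2 <= hnorm (hsub z p') ^ 2).
    { apply (IH (pre ++ [i])); [rewrite <- app_assoc; exact Hz | exact Hc]. }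
    pose proof (pow2_ge_0 (hnorm (hsub p p'))). lra.
Qed.

Lemma tgss_u_neq0 k z :
  Hstrip k z -> 0 < hinner (u_ k) (z_ k) - (alpha_ k + xi_ k) -> u_ k <> hzero.
Proof.
  intros Hz Hgap Hu. pose proof (strip_dist_ge _ _ _ _ (z_ k) Hz).
  rewrite Hu, hnorm_0 in *. lra.
Qed.

(* The first projection, onto the strip of index [k], already moves [z_ k] by
   the distance from [z_ k] to that strip; the later projections only help. *)
Lemma tgss_step_descent k rest z xn :
  (forall i, In i (k :: rest) -> Hstrip i z) ->
  0 < hinner (u_ k) (z_ k) - (alpha_ k + xi_ k) ->
  chain [] (k :: rest) (z_ k) xn ->
  hnorm (hsub z xn) ^ 2 <= hnorm (hsub z (z_ k)) ^ 2
    - ((hinner (u_ k) (z_ k) - (alpha_ k + xi_ k)) / hnorm (u_ k)) ^ 2.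
Proof.
  intros Hz Hgap [p1 [Hp1 Hc]].
  assert (Hzk : Hstrip k z) by (apply Hz; left; reflexivity).
  assert (Hu : 0 < hnorm (u_ k)).
  { pose proof (strip_dist_ge _ _ _ _ (z_ k) Hzk).
    pose proof (hnorm_ge0 (u_ k)). pose proof (hnorm_ge0 (hsub (z_ k) z)).
    destruct (Req_dec (hnorm (u_ k)) 0) as [E|E]; [rewrite E in *|]; lra. }
  pose proof (tgss_chain_fejer z rest [k] p1 xn Hz Hc) as Hrest.
  pose proof (is_proj_pythagoras _ _ _ _ (tgss_Hcap_convex [k]) Hp1
    (tgss_Hcap_snoc [] k rest z Hz)) as Hfirst.
  assert (Hdist : (hinner (u_ k) (z_ k) - (alpha_ k + xi_ k)) / hnorm (u_ k)
                  <= hnorm (hsub (z_ k) p1)).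
  { destruct Hp1 as [Hp1k _].
    pose proof (strip_dist_ge _ _ _ _ (z_ k) (Hp1k k (or_introl eq_refl))).
    apply (Rmult_le_reg_r (hnorm (u_ k))); [exact Hu|].
    unfold Rdiv. rewrite Rmult_assoc, Rinv_l by lra. lra. }
  assert (0 <= (hinner (u_ k) (z_ k) - (alpha_ k + xi_ k)) / hnorm (u_ k))
    by (apply Rlt_le, Rdiv_lt_0_compat; assumption).
  pose proof (pow_incr _ _ 2 (conj H Hdist)). lra.
Qed.

End TGSSStep.

Lemma residual_gap_pos eta delta N : 0 < eta < 1 -> 0 <= delta ->
  N > (1 + eta) / (1 - eta) * delta -> 0 < N - delta - eta * (N + delta).
Proof.
  intros Heta Hdelta HN.
  assert ((1 + eta) / (1 - eta) * delta * (1 - eta) = (1 + eta) * delta) by (field; lra).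
  assert (N * (1 - eta) > (1 + eta) / (1 - eta) * delta * (1 - eta))
    by (apply Rmult_gt_compat_r; lra).
  lra.
Qed.

Theorem proposition3p6
  (X Y : HilbertSpace) (DF : X -> Prop) (F : X -> Y) (F' : X -> X -> Y)
  (Fadj : X -> Y -> X) (x0 : X) (rho eta cF : R) (y yd : Y) (delta : R)
  (K : nat) (lam : nat -> R) (I : nat -> list nat) (x : nat -> X) (k : nat)
  (* setting *)
  (HF : cont_frechet DF F F')
  (Hadj : forall p, DF p -> is_adjoint (F' p) (Fadj p))
  (Hrho : rho > 0)
  (Hdom : forall p, ball x0 (4 * rho) p -> DF p)
  (* (A1) *)
  (HA1 : exists xs, ball x0 rho xs /\ F xs = y)
  (* (A2) *)
  (Heta : 0 < eta < 1)
  (HA2 : forall p q, ball x0 (4 * rho) p -> ball x0 (4 * rho) q ->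
     hnorm (hsub (hsub (F p) (F q)) (F' p (hsub p q)))
       <= eta * hnorm (hsub (F p) (F q)))
  (* (A3) *)
  (HA3 : forall p, ball x0 (4 * rho) p ->
     (exists h, F' p h <> hzero) /\ (forall h, hnorm (F' p h) <= cF * hnorm h))
  (* noisy data *)
  (Hdelta : delta > 0)
  (Hyd : hnorm (hsub yd y) <= delta)
  (* TGSS iteration up to x_k *)
  (HK : (1 <= K)%nat)
  (Hx0 : x 0%nat = x0)
  (Hlam : forall j, 0 <= lam j <= 1)
  (Hlam0 : lam 0%nat = 0)
  (HI : forall j, admissible_index_set K j (I j))
  (Hiter : forall j, (j < k)%nat -> tgss_step F Fadj yd delta eta lam x I j (x (S j)))
  (* assumption on the residual *)
  (Hres : hnorm (tgss_r F yd lam x k) > (1 + eta) / (1 - eta) * delta) :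
  halfspace_gt (tgss_u F Fadj yd lam x k)
    (tgss_alpha F Fadj yd lam x k + tgss_xi F yd delta eta lam x k)
    (tgss_z lam x k)
  /\
  ((forall i, In i (I k) -> ball x0 (4 * rho) (tgss_z lam x i)) ->
   forall z, ball x0 (4 * rho) z -> F z = y ->
     tgss_u F Fadj yd lam x k <> hzero /\
     (exists xn, tgss_step F Fadj yd delta eta lam x I k xn) /\
     (forall xn, tgss_step F Fadj yd delta eta lam x I k xn ->
        hnorm (hsub z xn) ^ 2 <=
          hnorm (hsub z (tgss_z lam x k)) ^ 2 -
          (hnorm (tgss_r F yd lam x k) *
            (hnorm (tgss_r F yd lam x k) - delta
               - eta * (hnorm (tgss_r F yd lam x k) + delta))
           / hnorm (tgss_u F Fadj yd lam x k)) ^ 2)).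
Proof.
  set (N := hnorm (tgss_r F yd lam x k)) in *.
  pose proof (residual_gap_pos eta delta N Heta ltac:(lra) Hres) as Hgap.
  assert (HN : 0 < N) by (pose proof (hnorm_ge0 (tgss_r F yd lam x k)); nra).
  assert (Habove : hinner (tgss_u F Fadj yd lam x k) (tgss_z lam x k)
      - (tgss_alpha F Fadj yd lam x k + tgss_xi F yd delta eta lam x k)
      = N * (N - delta - eta * (N + delta))).
  { unfold tgss_alpha, tgss_xi. fold N. ring. }
  rewrite <- Habove.
  assert (Hpos : 0 < N * (N - delta - eta * (N + delta))) by (apply Rmult_lt_0_compat; lra).
  split; [unfold halfspace_gt; lra|].
  intros Hball z Hz Fz.
  assert (Hsol : forall i, In i (I k) -> tgss_H F Fadj yd delta eta lam x i z).
  { intros i Hi. pose proof (Hball i Hi) as Hzi.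
    exact (solution_in_strip F _ _ _ z y yd delta eta (Hadj _ (Hdom _ Hzi))
             ltac:(lra) Fz Hyd (HA2 _ _ Hzi Hz)). }
  destruct (HI k) as [Hhead _]. unfold tgss_step.
  destruct (I k) as [|k1 rest]; simpl in Hhead; [discriminate|].
  injection Hhead as ->.
  split; [|split].
  - exact (tgss_u_neq0 _ _ _ _ _ _ _ _ z (Hsol k (or_introl eq_refl)) ltac:(lra)).
  - exact (tgss_chain_exists _ _ _ _ _ _ _ z _ [] _ Hsol).
  - intros xn Hxn. exact (tgss_step_descent _ _ _ _ _ _ _ _ _ _ _ Hsol ltac:(lra) Hxn).
Qed.
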